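(* Consider an instance of the Side-Access Compact Retrieval Problem, a feasible solution, a cycle $c$ of it, and the set $Y$ of targets retrieved in cycle $c$. List the distinct heights $\{h_c(b): b\in Y\}$ in increasing order as $h_1<\dots<h_p$. Then $h_{i+1}=h_i+1$ for all $i\in\{1,\dots,p-1\}$, i.e., the heights of $Y$ form a consecutive interval.
   Context: A slice is a sequence of stacks $T=(1,\dots,m)$, indexed from the entry side (stack $1$) outward; ''left'' means smaller index. Stack $t$ initially consists of $h(t)\ge0$ unit loads (ULs) stacked without gaps; a UL at height $k$ has exactly $k$ ULs below it in its stack. A pick-list $\mathcal B$ of target ULs is given; target $b$ lies in stack $s(b)$ at initial height $h(b)$. Retrieval proceeds in cycles $c=1,2,\dots$; $h_c(t)$, $h_c(b)$ are the heights of stack $t$ and of a not-yet-retrieved target $b$ at the start of cycle $c$ ($h_1=h$). In cycle $c$ one chooses clearance levels $\ell_c(t)\in\{0,\dots,h_c(t)\}$: the top $e_c(t)=h_c(t)-\ell_c(t)$ ULs of stack $t$ are lifted for the whole cycle. Then a sequence $(b_{c,1},\dots,b_{c,k})$ of targets is retrieved, with residual heights $d_{c,0}=\ell_c$ and $d_{c,i}(t)=d_{c,i-1}(t)-1$ if $t=s(b_{c,i})$, else unchanged. Retrieving $b$ (stack $t$, height $h=h_c(b)$) as the $i$-th retrieval requires accessibility: (a) $d_{c,i-1}(t)=h+1$ and (b) $d_{c,i-1}(t')=h$ for all $t'<t$. Afterwards lifted ULs are lowered, $h_{c+1}(t)=d_{c,k}(t)+e_c(t)$, and each remaining target's height decreases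 by the number of targets retrieved in cycle $c$ below it in its stack. Non-targets are never removed. A solution is feasible if every target is retrieved exactly once and is accessible when retrieved. *)

(* Side-Access Compact Retrieval Problem, modelled on heights
   exactly as in the paper. Stacks are indexed by nat 1..m; targets form a
   finType B. *)
From mathcomp Require Import all_boot.
Set Implicit Arguments. Unset Strict Implicit. Unset Printing Implicit Defensive.

Section Scrp.
Variable B : finType.
Variable s : B -> nat.

(* A cycle: clearance levels l_c(t) and the retrieval sequence (b_{c,1..k}). *)
Definition cycle_t := ((nat -> nat) * seq B)%type.
(* A state at the start of a cycle: h_c(t) for stacks, h_c(b) for targets. *)
Definition state_t := ((nat -> nat) * (B -> nat))%type.

Definition resid (l : nat -> nat) (pre : seq B) (t : nat) : nat :=
  l t - count (fun b => s b == t) pre.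

Definition accessible (hb : B -> nat) (l : nat -> nat) (pre : seq B) (b : B)
  : Prop :=
  resid l pre (s b) = (hb b).+1 /\
  forall t', 1 <= t' < s b -> resid l pre t' = hb b.

Definition step (st : state_t) (cy : cycle_t) : state_t :=
  let: (H, hb) := st in let: (l, bs) := cy in
  (fun t => resid l bs t + (H t - l t),
   fun b => hb b - count (fun b' => (s b' == s b) && (hb b' < hb b)) bs).

(* state at the start of cycle c (0-based: cycle c is [nth c sol]) *)
Fixpoint state_at (st0 : state_t) (sol : seq cycle_t) (c : nat) : state_t :=
  match c, sol with
  | 0, _ => st0
  | c'.+1, cy :: sol' => state_at (step st0 cy) sol' c'
  | _.+1, [::] => st0
  end.

Definition cycle0 : cycle_t := (fun _ => 0, [::]).

Definition feasible (m : nat) (st0 : state_t) (sol : seq cycle_t) : Prop :=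
  perm_eq (flatten (map snd sol)) (enum B) /\
  forall c, c < size sol ->
    let: (l, bs) := nth cycle0 sol c in
    let: (H, hb) := state_at st0 sol c in
    (forall t, 1 <= t <= m -> l t <= H t) /\
    (forall pre b post, bs = pre ++ b :: post -> accessible hb l pre b).
End Scrp.

(* Stack 1 is the leftmost stack, so every accessibility condition reads off
   its residual height: just before retrieving b it is h_c(b) or h_c(b) + 1,
   and just after it is exactly h_c(b).  Hence two consecutive retrievals b, b'
   of a cycle satisfy h_c(b') in {h_c(b) - 1, h_c(b)}: along the retrieval
   sequence the heights descend in steps of at most one, so they sweep an
   interval.  Only 1 <= s(b) is used of the well-formedness hypotheses. *)
From mathcomp Require Import all_boot.
From mathcomp Require Import zify.

Set Implicit Arguments.
Unset Strict Implicit.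
Unset Printing Implicit Defensive.

Definition down_by_le1 (x y : nat) : bool := y <= x <= y.+1.

Lemma mem_down_by_le1_path (x : nat) (xs : seq nat) :
  path down_by_le1 x xs -> forall z, (z \in x :: xs) = (last x xs <= z <= x).
Proof.
elim: xs x => [|y ys IH] x /=; first by move=> _ z; rewrite inE eqn_leq andbC.
move=> /andP[/andP[yx xy] ys_path] z.
have := IH y ys_path y; rewrite mem_head => /esym/andP[last_le_y _].
rewrite in_cons IH //; case: (z =P x) => [->|/eqP]; lia.
Qed.

Lemma sort_undup_down_by_le1_path (x : nat) (xs : seq nat) :
  path down_by_le1 x xs ->
  sort leq (undup (x :: xs)) = iota (last x xs) (x - last x xs).+1.
Proof.
move=> xs_path; have mem_xs := mem_down_by_le1_path xs_path.
apply: (irr_sorted_eq ltn_trans ltnn); last first.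
- move=> z; rewrite mem_sort mem_undup mem_iota mem_xs.
  have := mem_xs x; rewrite mem_head; lia.
- exact: iota_ltn_sorted.
rewrite ltn_sorted_uniq_leq sort_sorted ?sort_uniq ?undup_uniq //.
exact: leq_total.
Qed.

Section Accessibility.
Variables (B : finType) (s : B -> nat) (hc : B -> nat) (l : nat -> nat).
Hypothesis s_ge1 : forall b, 1 <= s b.

Lemma resid_rcons pre b t :
  resid s l (rcons pre b) t = resid s l pre t - (s b == t).
Proof. by rewrite /resid -cats1 count_cat /= addn0 subnDA. Qed.

Lemma accessible_resid1_before pre b :
  accessible s hc l pre b -> hc b <= resid s l pre 1 <= (hc b).+1.
Proof.
case=> resid_sb resid_left; case: (eqVneq (s b) 1) => [<-|sb_neq1].
  by rewrite resid_sb leqnSn leqnn.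
by rewrite resid_left ?leqnn ?leqnSn //; have := s_ge1 b; lia.
Qed.

Lemma accessible_resid1_after pre b :
  accessible s hc l pre b -> resid s l (rcons pre b) 1 = hc b.
Proof.
case=> resid_sb resid_left; rewrite resid_rcons.
case: (eqVneq (s b) 1) => [sb1|sb_neq1] /=.
  by rewrite -sb1 resid_sb sb1 subn1.
by rewrite subn0 resid_left //; have := s_ge1 b; lia.
Qed.

Lemma accessible_next_down_by_le1 pre b b' :
  accessible s hc l pre b -> accessible s hc l (rcons pre b) b' ->
  down_by_le1 (hc b) (hc b').
Proof.
move=> /accessible_resid1_after <- /accessible_resid1_before.
by rewrite /down_by_le1.
Qed.

Lemma accessible_seq_path pre b bs :
  (forall pre' b' post, pre ++ b :: bs = pre' ++ b' :: post ->
     accessible s hc l pre' b') ->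
  path down_by_le1 (hc b) (map hc bs).
Proof.
elim: bs pre b => [|b' bs IH] pre b acc //=.
have acc_b' : accessible s hc l (rcons pre b) b'.
  by apply: (acc _ _ bs); rewrite cat_rcons.
rewrite (accessible_next_down_by_le1 (acc pre b _ erefl) acc_b') /=.
apply: (IH (rcons pre b)) => pre' b'' post split_bs.
by apply: (acc pre' b'' post); rewrite -split_bs cat_rcons.
Qed.

End Accessibility.

Theorem lemma2 (B : finType) (s : B -> nat) (m : nat)
    (h0 : nat -> nat) (hb0 : B -> nat)
    (* well-formed instance *)
    (Hs : forall b, 1 <= s b <= m)
    (Hh : forall b, hb0 b < h0 (s b))
    (Hinj : forall b b', s b = s b' -> hb0 b = hb0 b' -> b = b')
    (sol : seq (cycle_t B)) (c : nat)
    (Hfeas : feasible s m (h0, hb0) sol) (Hc : c < size sol) :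
  let Y := (nth (cycle0 B) sol c).2 in
  let hc := (state_at s (h0, hb0) sol c).2 in
  let hs := sort leq (undup [seq hc b | b <- Y]) in
  forall i, i.+1 < size hs -> nth 0 hs i.+1 = (nth 0 hs i).+1.
Proof.
case: Hfeas => _ /(_ c Hc).
case: (nth (cycle0 B) sol c) => l bs.
case: (state_at s (h0, hb0) sol c) => H hc [_ acc] /=.
have s_ge1 b : 1 <= s b by case/andP: (Hs b).
case: bs acc => [|b bs] acc i //=.
have heights_path := accessible_seq_path s_ge1 (pre := [::]) acc.
rewrite (sort_undup_down_by_le1_path heights_path) size_iota => lt_i.
by rewrite !nth_iota ?addnS // ltnW.
Qed.
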